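(* Let $G=(V,E)$ with weight $\mu$ be an infinite, connected, locally finite weighted graph satisfying condition $(p_0)$, let $m>1$, and fix $o\in V$. Let $(p,q)\in G_2=\{(p,q)\in\mathbb R^2: q\ge m\}$. Suppose there exist constants $C>0$ and $n_1$ such that $$W_o(n)\le C\, n^{m}(\ln n)^{m-1}\quad\text{for all } n\ge n_1.$$ Then the inequality $\Delta_m u+u^p|\nabla u|^q\le 0$ on $V$ admits no nontrivial positive solution.
   Context: Setting: $G=(V,E)$ is an infinite, connected, locally finite graph with no loops and no multiple edges; $x\sim y$ means $x$ and $y$ are joined by an edge. A weight is a symmetric function $\mu:V\times V\to[0,\infty)$ with $\mu_{xy}=\mu_{yx}>0$ if and only if $x\sim y$; the vertex measure is $\mu(x)=\sum_{y\sim x}\mu_{xy}$. For $m>1$ and $u:V\to\mathbb R$, $\Delta_m u(x)=\frac{1}{\mu(x)}\sum_{y\sim x}\mu_{xy}|u(y)-u(x)|^{m-2}(u(y)-u(x))$ and $|\nabla u(x)|=\big(\sum_{y\sim x}\frac{\mu_{xy}}{2\mu(x)}(u(y)-u(x))^2\big)^{1/2}$. Condition $(p_0)$: there is a constant $p_0>1$ such that $\mu_{xy}/\mu(x)\ge 1/p_0$ for all $x\sim y$. $d(x,y)$ is the graph (shortest path) distance, $B(o,n)=\{x\in V: d(o,x)\le n\}$, and $W_o(n)=\sum_{x\in B(o,n),\,y\in V,\,d(o,x)<d(o,y)}\mu_{xy}$. A nontrivial positive solution of $\Delta_m u+u^p|\nabla u|^q\le 0$ is a non-constant function $u:V\to(0,\infty)$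 such that $\Delta_m u(x)+u(x)^p|\nabla u(x)|^q\le 0$ for every $x\in V$, with the conventions $0^0=1$, $0^q=0$ for $q>0$, and, for $q<0$, $|\nabla u(x)|^q=+\infty$ when $|\nabla u(x)|=0$ (so the inequality fails at such $x$). *)

From HB Require Import structures.
From mathcomp Require Import all_boot all_order all_algebra.
From mathcomp Require Import all_classical all_reals all_analysis.
Set Implicit Arguments. Unset Strict Implicit. Unset Printing Implicit Defensive.
Import Order.TTheory GRing.Theory Num.Theory.
Local Open Scope classical_set_scope.
Local Open Scope ring_scope.

Section Graph.
Variable V : choiceType.
Variable adj : V -> V -> Prop.

Inductive walk : V -> V -> nat -> Prop :=
| walk0 x : walk x x 0
| walkS x y z n : adj x y -> walk y z n -> walk x z n.+1.

Definition simple_graph : Prop :=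
  (forall x, ~ adj x x) /\ (forall x y, adj x y -> adj y x).
Definition locally_finite : Prop := forall x, finite_set [set y | adj x y].
Definition graph_connected : Prop := forall x y, exists n, walk x y n.
Definition infinite_graph : Prop := infinite_set [set: V].

(* graph (shortest path) distance; 0 if no path (never happens when connected) *)
Definition dist (x y : V) : nat :=
  match pselect (exists n, `[< walk x y n >]) with
  | left P => ex_minn P
  | right _ => 0%N
  end.

Definition ball (o : V) (n : nat) : set V := [set x | (dist o x <= n)%N].

Variable R : realType.
Variable mu : V -> V -> R.

Definition is_weight : Prop :=
  (forall x y, mu x y = mu y x) /\ (forall x y, 0 <= mu x y) /\
  (forall x y, 0 < mu x y <-> adj x y).

Definition vmeas (x : V) : R := \sum_(y \in [set y | adj x y]) mu x y.

Definition cond_p0 : Prop :=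
  exists p0 : R, 1 < p0 /\ forall x y, adj x y -> 1 / p0 <= mu x y / vmeas x.

Definition mLap (m : R) (u : V -> R) (x : V) : R :=
  (vmeas x)^-1 * \sum_(y \in [set y | adj x y])
      (mu x y * (`|u y - u x| `^ (m - 2)) * (u y - u x)).

Definition grad_norm (u : V -> R) (x : V) : R :=
  Num.sqrt (\sum_(y \in [set y | adj x y])
              (mu x y / (2 * vmeas x) * (u y - u x) ^+ 2)).

Definition W (o : V) (n : nat) : R :=
  \sum_(x \in ball o n) \sum_(y \in [set y | (dist o x < dist o y)%N]) mu x y.

(* Delta_m u(x) + u(x)^p |nabla u(x)|^q <= 0, with the convention that for
   q < 0 and |nabla u(x)| = 0 the term is +oo (inequality fails).  For q > 0,
   powR gives 0^q = 0; for q = 0, powR gives 0^0 = 1. *)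
Definition ineq_at (m p q : R) (u : V -> R) (x : V) : Prop :=
  if (q < 0) && (grad_norm u x == 0) then False
  else mLap m u x + u x `^ p * grad_norm u x `^ q <= 0.

Definition nontrivial_positive_solution (m p q : R) (u : V -> R) : Prop :=
  (forall x, 0 < u x) /\ (exists x y, u x != u y) /\
  (forall x, ineq_at m p q u x).
End Graph.

(* Since q >= m > 0, a positive solution u satisfies Delta_m u <= 0, and so does
   its truncation w = min(u, M) at a level M where u is not yet constant; w is a
   bounded, non-constant, m-superharmonic function.  Testing the superharmonicity
   of w against phi^m (M - w) gives a Caccioppoli inequality: on an edge xy where
   phi = 1, mu_xy |w y - w x|^m is at most a constant times the m-energy of phi.
   The growth bound on W_o makes the graph m-parabolic: the radial cutoff that
   decreases by c / ((j+1) 2^j) per unit of radius on each dyadic shell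
   [2^j, 2^(j+1)), J <= j < J', has energy O(c^m H) with H the harmonic sum
   sum_(J <= j < J') 1/(j+1); it vanishes outside the ball of radius 2^J' once
   c = 1/H, and then its energy is O(H^(1-m)), which tends to 0 as J' grows.
   Hence w is constant along every edge, hence constant, a contradiction. *)

From Pilot Require Import Defs.
From HB Require Import structures.
From mathcomp Require Import all_boot all_order all_algebra.
From mathcomp Require Import all_classical all_reals all_analysis.
From mathcomp Require Import ring lra.
Set Implicit Arguments. Unset Strict Implicit. Unset Printing Implicit Defensive.
Import Order.TTheory GRing.Theory Num.Theory.
Local Open Scope classical_set_scope.
Local Open Scope ring_scope.

Section SignedPower.
Variable R : realType.
Implicit Types m s t : R.

Definition spow m t : R := `|t| `^ (m - 2) * t.

Lemma spow_mulr m t : 0 < m -> spow m t * t = `|t| `^ m.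
Proof.
move=> m0; rewrite /spow -mulrA -expr2 -real_normK ?num_real//.
rewrite -(powR_mulrn _ (normr_ge0 t)) -powRD; first by congr (_ `^ _); lra.
by apply/implyP => /eqP; lra.
Qed.

Lemma normr_spow m t : 1 < m -> `|spow m t| = `|t| `^ (m - 1).
Proof.
move=> m1; rewrite /spow normrM ger0_norm ?powR_ge0//.
rewrite -{2}(powRr1 (normr_ge0 t)) -powRD; first by congr (_ `^ _); lra.
by apply/implyP => /eqP; lra.
Qed.

Lemma spowN m t : spow m (- t) = - spow m t.
Proof. by rewrite /spow normrN mulrN. Qed.

Lemma spow_ge0 m t : 0 <= t -> 0 <= spow m t.
Proof. by move=> t0; rewrite mulr_ge0 ?powR_ge0. Qed.

Lemma spow_le0 m t : t <= 0 -> spow m t <= 0.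
Proof. by move=> t0; rewrite mulr_ge0_le0 ?powR_ge0. Qed.

Lemma ger0_spow m t : 1 < m -> 0 <= t -> spow m t = t `^ (m - 1).
Proof. by move=> m1 t0; rewrite -[LHS]ger0_norm ?spow_ge0// normr_spow// ger0_norm. Qed.

Lemma ler_spow m s t : 1 < m -> 0 <= s <= t -> spow m s <= spow m t.
Proof.
move=> m1 /andP[s0 st]; rewrite !ger0_spow//; last exact: le_trans st.
by apply: ge0_ler_powR => //; rewrite ?nnegrE//; [lra|exact: le_trans st].
Qed.

End SignedPower.

Section PowerInequalities.
Variable R : realType.
Implicit Types m a b t X Y A : R.

Lemma powR_ge_affine m t : 0 <= m -> 2^-1 <= t <= 1 -> 1 - 2 * m * (1 - t) <= t `^ m.
Proof.
move=> m0 /andP[t2 t1]; have t0 : 0 < t by lra.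
have lnt : - (2 * (1 - t)) <= ln t.
  have tV0 : 0 < t^-1 by rewrite invr_gt0.
  have tV : -1 < t^-1 - 1 by lra.
  have := le_ln1Dx tV; rewrite addrC subrK lnV ?posrE// => h.
  have : t^-1 <= 2 * (1 - t) + 1.
    by rewrite -[t^-1]mul1r ler_pdivrMr //; nra.
  lra.
rewrite /powR gt_eqF//; apply: le_trans (expR_ge1Dx _); nra.
Qed.

Lemma powR_subr_le m a b : 1 <= m -> 0 <= b <= a ->
  a `^ m - b `^ m <= 2 * m * a `^ (m - 1) * (a - b).
Proof.
move=> m1 /andP[b0 ba].
have [a0|a0] := eqVneq a 0.
  have -> : b = 0 by lra.
  by rewrite a0 !subrr mulr0.
have {}a0 : 0 < a by rewrite lt_def a0 (le_trans b0 ba).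
have am : a `^ m = a * a `^ (m - 1) by rewrite mulr_powRB1 ?ltW//; lra.
have am0 : 0 <= a `^ (m - 1) by apply: powR_ge0.
have bm0 : 0 <= b `^ m by apply: powR_ge0.
have [hb|hb] := leP (2 * b) a.
  have : a <= 2 * m * (a - b) by nra.
  by rewrite am; nra.
pose t := b / a.
have bt : b = t * a by rewrite /t divfK// gt_eqF.
have t01 : 2^-1 <= t <= 1.
  apply/andP; split; rewrite /t; first by rewrite ler_pdivlMr //; lra.
  by rewrite ler_pdivrMr // mul1r.
have m0 : 0 <= m by lra.
have ht := powR_ge_affine m0 t01.
have -> : b `^ m = t `^ m * a `^ m by rewrite {1}bt powRM //; lra.
have -> : a - b = (1 - t) * a by rewrite bt; ring.
have aA0 : 0 <= a * a `^ (m - 1) by rewrite mulr_ge0 // ltW.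
rewrite am; nra.
Qed.

Lemma powR_young m X Y A : 1 < m -> 0 <= X -> 0 <= Y -> 0 < A ->
  X `^ (m - 1) * Y <= X `^ m / A + A `^ (m - 1) * Y `^ m.
Proof.
move=> m1 X0 Y0 A0.
have Xm0 : 0 <= X `^ m / A by rewrite divr_ge0 ?powR_ge0// ltW.
have Ym0 : 0 <= A `^ (m - 1) * Y `^ m by rewrite mulr_ge0 ?powR_ge0.
have [XAY|AYX] := leP X (A * Y).
  have : X `^ (m - 1) <= (A * Y) `^ (m - 1).
    apply: (ge0_ler_powR _ _ _ XAY); rewrite ?nnegrE//; first lra.
    by rewrite mulr_ge0 // ltW.
  rewrite powRM ?(ltW A0)// => h.
  have := ler_wpM2r Y0 h.
  by rewrite -mulrA [Y `^ _ * Y]mulrC mulr_powRB1//; lra.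
have YXA : Y <= X / A by rewrite ler_pdivlMr// mulrC ltW.
have := ler_wpM2l (powR_ge0 X (m - 1)) YXA.
by rewrite mulrA [X `^ _ * X]mulrC mulr_powRB1//; lra.
Qed.

End PowerInequalities.

Section EdgeCaccioppoli.
Variable R : realType.
Variables (m M : R).

Definition cacc_const : R := 2 * m * M * (4 * m * M) `^ (m - 1).

Lemma cacc_const_ge0 : 0 <= m -> 0 <= M -> 0 <= cacc_const.
Proof. by move=> m0 M0; rewrite !mulr_ge0 ?powR_ge0. Qed.

(* One edge of the superharmonicity of w tested against phi^m (M - w); the cross
   term is absorbed by Young's inequality with weight 4 m M. *)
Lemma caccioppoli_edge_le (px py wx wy : R) : 1 < m -> 0 < M -> 0 <= py <= px ->
  0 <= wx <= M -> 0 <= wy <= M ->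
  px `^ m * `|wy - wx| `^ m / 2 - cacc_const * `|px - py| `^ m <=
  spow m (wy - wx) * (px `^ m * (M - wx) - py `^ m * (M - wy)).
Proof.
move=> m1 M0 /andP[py0 pyx] /andP[wx0 wxM] /andP[wy0 wyM].
have px0 : 0 <= px by apply: le_trans pyx.
set d := wy - wx; set rx := px `^ m; set ry := py `^ m.
have ryx : ry <= rx by apply: ge0_ler_powR; rewrite ?nnegrE //; lra.
have -> : spow m d * (rx * (M - wx) - ry * (M - wy)) =
    rx * (spow m d * d) + spow m d * (M - wy) * (rx - ry).
  by rewrite /d; ring.
rewrite spow_mulr; last lra.
set X := `|d| * px.
have Xm : X `^ m = `|d| `^ m * rx by rewrite /X powRM.
have cross : `|spow m d * (M - wy) * (rx - ry)| <=
    X `^ m / 2 + cacc_const * (px - py) `^ m.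
  rewrite 2!normrM normr_spow // (ger0_norm (x := M - wy)) ?subr_ge0 //.
  rewrite (ger0_norm (x := rx - ry)) ?subr_ge0 //.
  have hr : rx - ry <= 2 * m * px `^ (m - 1) * (px - py).
    by apply: powR_subr_le; [lra|rewrite py0 pyx].
  have hM : `|d| `^ (m - 1) * (M - wy) * (rx - ry) <=
      2 * m * M * (X `^ (m - 1) * (px - py)).
    have -> : 2 * m * M * (X `^ (m - 1) * (px - py)) =
        `|d| `^ (m - 1) * M * (2 * m * px `^ (m - 1) * (px - py)).
      by rewrite /X powRM //; ring.
    by apply: ler_pM; rewrite ?mulr_ge0 ?powR_ge0 ?subr_ge0 // ler_wpM2l ?powR_ge0 //; lra.
  apply: le_trans hM _.
  have A0 : 0 < 4 * m * M by rewrite !mulr_gt0 //; lra.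
  have c0 : 0 <= 2 * m * M by rewrite !mulr_ge0 //; lra.
  have -> : X `^ m / 2 + cacc_const * (px - py) `^ m =
      2 * m * M * (X `^ m / (4 * m * M) + (4 * m * M) `^ (m - 1) * (px - py) `^ m).
    by rewrite /cacc_const; field; rewrite !gt_eqF //; lra.
  apply: (ler_wpM2l c0).
  have pp : 0 <= px - py by rewrite subr_ge0.
  exact: powR_young m1 (mulr_ge0 (normr_ge0 d) px0) pp A0.
rewrite (ger0_norm (x := px - py)) ?subr_ge0 //.
move: cross; rewrite ler_norml Xm => /andP[cross _].
have : rx * `|d| `^ m = `|d| `^ m * rx by rewrite mulrC.
lra.
Qed.

Lemma caccioppoli_edge (px py wx wy : R) : 1 < m -> 0 < M -> 0 <= px -> 0 <= py ->
  0 <= wx <= M -> 0 <= wy <= M ->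
  Num.max (px `^ m) (py `^ m) * `|wy - wx| `^ m / 2 - cacc_const * `|px - py| `^ m <=
  spow m (wy - wx) * (px `^ m * (M - wx) - py `^ m * (M - wy)).
Proof.
move=> m1 M0 px0 py0 hx hy.
have [pyx|pxy] := leP py px.
  rewrite max_l; last by apply: ge0_ler_powR; rewrite ?nnegrE //; lra.
  by apply: caccioppoli_edge_le => //; rewrite py0 pyx.
rewrite max_r; last by apply: ge0_ler_powR; rewrite ?nnegrE //; lra.
have := @caccioppoli_edge_le py px wy wx m1 M0 _ hy hx; rewrite px0 ltW // => /(_ isT).
rewrite distrC (distrC px) -(opprB wy) spowN.
by congr (_ <= _); ring.
Qed.

End EdgeCaccioppoli.

Lemma fsbig_seq_mkcond (R : realType) (T : choiceType) (A : set T) (f : T -> R) (s : seq T) :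
  uniq s -> (forall y, A y -> f y != 0 -> y \in s) ->
  \sum_(y \in A) f y = \sum_(y <- s) (if y \in A then f y else 0).
Proof.
move=> us sf; rewrite fsbig_mkcond -(fsbig_widen [set` s] [set: T]) //; last first.
  move=> x [_ /= xs]; rewrite /patch /=; case: ifP => // /set_mem Ax.
  by case: (eqVneq (f x) 0) => // /(sf _ Ax).
by rewrite -fsbig_seq.
Qed.

Lemma sum_seq_ge_term (R : realType) (T : eqType) (s : seq T) (F : T -> R) x :
  uniq s -> x \in s -> (forall y, y \in s -> 0 <= F y) -> F x <= \sum_(y <- s) F y.
Proof.
move=> us xs F0; rewrite (bigD1_seq x) //= lerDl.
by rewrite big_seq_cond sumr_ge0 // => i /andP[/F0].
Qed.

Section Walks.
Variables (V : choiceType) (adj : V -> V -> Prop).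

Lemma walk0_eq x y : walk adj x y 0 -> x = y.
Proof. by move=> w; inversion w. Qed.

Lemma walkS_inv x y n : walk adj x y n.+1 -> exists2 z, adj x z & walk adj z y n.
Proof. by move=> w; inversion w; subst; exists y0. Qed.

Lemma walk_rcons x y z n : walk adj x y n -> adj y z -> walk adj x z n.+1.
Proof.
elim=> [a az|a b c k ab _ IH cz]; first exact: walkS az (walk0 _ _).
exact: walkS ab (IH cz).
Qed.

Lemma walk_edge_neq (T : eqType) (f : V -> T) x y n :
  walk adj x y n -> f x != f y -> exists a b, adj a b /\ f a != f b.
Proof.
elim=> [z|a b c k ab _ IH]; first by rewrite eqxx.
by have [-> /IH|] := eqVneq (f a) (f b); last by exists a, b.
Qed.

Lemma dist_le_walk x y n : walk adj x y n -> (dist adj x y <= n)%N.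
Proof.
move=> w; rewrite /dist; case: pselect => [P|nP]; last by [].
by case: ex_minnP => k _ /(_ n); apply; apply/asboolP.
Qed.

Hypothesis adj_conn : graph_connected adj.

Lemma walk_dist x y : walk adj x y (dist adj x y).
Proof.
rewrite /dist; case: pselect => [P|nP]; first by case: ex_minnP => n /asboolP.
by have [n w] := adj_conn x y; case: nP; exists n; apply/asboolP.
Qed.

Lemma dist_adj o x y : adj x y -> (dist adj o y <= (dist adj o x).+1)%N.
Proof. by move=> xy; apply: dist_le_walk; apply: walk_rcons (walk_dist _ _) xy. Qed.

Lemma finite_ball o n : locally_finite adj -> finite_set (Defs.ball adj o n).
Proof.
move=> lf; elim: n o => [|n IH] o.
  apply: (sub_finite_set (B := [set o])); last exact: finite_set1.
  move=> x; rewrite /Defs.ball /= leqn0 => /eqP d0.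
  by have := walk_dist o x; rewrite d0 => /walk0_eq <-.
apply: (sub_finite_set (B := [set o] `|` \bigcup_(z in [set z | adj o z]) Defs.ball adj z n)).
  move=> x; rewrite /Defs.ball /=.
  have := walk_dist o x; case: (dist adj o x) => [/walk0_eq <-|k]; first by left.
  case/walkS_inv => z oz zx kn; right; exists z => //=.
  exact: leq_trans (dist_le_walk zx) kn.
by rewrite finite_setU; split; [exact: finite_set1|exact: bigcup_finite].
Qed.

Lemma adj_exists x : infinite_graph V -> exists y, adj x y.
Proof.
move=> Vinf; have [y yx] : exists y, y != x.
  apply: contrapT => allx; apply: Vinf.
  apply: (sub_finite_set (B := [set x])); last exact: finite_set1.
  by move=> y _ /=; apply: contrapT => yx; apply: allx; exists y; apply/eqP.
have [[|n] w] := adj_conn x y; first by move: yx; rewrite (walk0_eq w) eqxx.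
by case/walkS_inv: w => z xz _; exists z.
Qed.

End Walks.

Lemma sum_antisym_mulB (R : pzRingType) (T : Type) (s : seq T) (K : T -> T -> R) (f : T -> R) :
  (forall x y, K y x = - K x y) ->
  \sum_(x <- s) \sum_(y <- s) K x y * (f x - f y) =
  2 * \sum_(x <- s) \sum_(y <- s) K x y * f x.
Proof.
move=> Kanti.
have -> : \sum_(x <- s) \sum_(y <- s) K x y * (f x - f y) =
    \sum_(x <- s) \sum_(y <- s) K x y * f x - \sum_(x <- s) \sum_(y <- s) K x y * f y.
  by rewrite -sumrB; apply: eq_bigr => x _; rewrite -sumrB; apply: eq_bigr => y _; rewrite mulrBr.
have -> : \sum_(x <- s) \sum_(y <- s) K x y * f y = - \sum_(x <- s) \sum_(y <- s) K x y * f x.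
  rewrite exchange_big /= -sumrN; apply: eq_bigr => y _.
  by rewrite -sumrN; apply: eq_bigr => x _; rewrite [K y x]Kanti mulNr opprK.
by rewrite opprK mulr2n mulrDl mul1r.
Qed.

Section Caccioppoli.
Variables (R : realType) (V : choiceType) (adj : V -> V -> Prop) (mu : V -> V -> R) (m : R).

Definition energy (s : seq V) (phi : V -> R) : R :=
  \sum_(x <- s) \sum_(y <- s) mu x y * `|phi x - phi y| `^ m.

Definition msuperharmonic (w : V -> R) : Prop :=
  forall x, \sum_(y \in [set y | adj x y]) mu x y * spow m (w y - w x) <= 0.

Definition nbhd_support_in (s : seq V) (phi : V -> R) : Prop :=
  forall x, phi x != 0 -> x \in s /\ forall y, adj x y -> y \in s.

Hypothesis mu_sym : forall x y, mu x y = mu y x.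
Hypothesis mu_ge0 : forall x y, 0 <= mu x y.
Hypothesis mu_adj : forall x y, 0 < mu x y <-> adj x y.

Lemma mu_nadj x y : ~ adj x y -> mu x y = 0.
Proof.
move=> nxy; apply/eqP; rewrite eq_le mu_ge0 andbT leNgt.
by apply/negP => /mu_adj.
Qed.

Lemma sum_adj_seq s x (F : V -> R) : uniq s -> (forall y, adj x y -> y \in s) ->
  \sum_(y \in [set y | adj x y]) mu x y * F y = \sum_(y <- s) mu x y * F y.
Proof.
move=> us nbs; rewrite (fsbig_seq_mkcond us) => [|y /= xy _]; last exact: nbs.
apply: eq_bigr => y _; case: ifPn => // /negP nxy.
by rewrite mu_nadj ?mul0r // => xy; apply: nxy; apply/mem_set.
Qed.

Variables (M : R) (w : V -> R).
Hypothesis w_bound : forall x, 0 <= w x <= M.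
Hypothesis w_super : msuperharmonic w.

Lemma caccioppoli s phi x0 y0 : 1 < m -> 0 < M ->
  uniq s -> nbhd_support_in s phi -> (forall x, 0 <= phi x) ->
  x0 \in s -> y0 \in s -> phi x0 = 1 -> phi y0 = 1 ->
  mu x0 y0 * `|w y0 - w x0| `^ m / 2 <= cacc_const m M * energy s phi.
Proof.
move=> m1 M0 us phi_supp phi0 x0s y0s phix0 phiy0.
pose f x := phi x `^ m * (M - w x).
pose K x y := mu x y * spow m (w y - w x).
pose G x y := mu x y * (Num.max (phi x `^ m) (phi y `^ m) * `|w y - w x| `^ m / 2).
have tested : \sum_(x <- s) \sum_(y <- s) K x y * f x <= 0.
  rewrite big_seq sumr_le0 // => x xs; rewrite -mulr_suml.
  have [phix|/phi_supp[_ nbs]] := eqVneq (phi x) 0.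
    by rewrite /f phix powR0 ?mul0r ?mulr0 // gt_eqF //; lra.
  rewrite -sum_adj_seq // mulr_le0_ge0 ?w_super // /f mulr_ge0 ?powR_ge0 // subr_ge0.
  by case/andP: (w_bound x).
have pointwise : \sum_(x <- s) \sum_(y <- s) G x y - cacc_const m M * energy s phi <=
    \sum_(x <- s) \sum_(y <- s) K x y * (f x - f y).
  rewrite /energy mulr_sumr -sumrB; apply: ler_sum => x _.
  rewrite mulr_sumr -sumrB; apply: ler_sum => y _.
  have := ler_wpM2l (mu_ge0 x y)
    (caccioppoli_edge m1 M0 (phi0 x) (phi0 y) (w_bound x) (w_bound y)).
  by rewrite /G /K /f; congr (_ <= _); ring.
have Kanti x y : K y x = - K x y by rewrite /K mu_sym -opprB spowN mulrN.
have G0 x y : 0 <= G x y.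
  by rewrite /G mulr_ge0 // divr_ge0 // mulr_ge0 ?powR_ge0 // le_max powR_ge0.
have Gx0y0 : mu x0 y0 * `|w y0 - w x0| `^ m / 2 <= \sum_(x <- s) \sum_(y <- s) G x y.
  have -> : mu x0 y0 * `|w y0 - w x0| `^ m / 2 = G x0 y0.
    by rewrite /G phix0 phiy0 powR1 maxxx mul1r mulrA.
  apply: le_trans (sum_seq_ge_term us y0s (fun y _ => G0 x0 y)) _.
  by apply: (sum_seq_ge_term (F := fun x => \sum_(y <- s) G x y)) => // x _; rewrite sumr_ge0.
move: pointwise; rewrite sum_antisym_mulB //; lra.
Qed.

End Caccioppoli.

Section RadialEnergy.
Variables (R : realType) (V : choiceType) (adj : V -> V -> Prop) (mu : V -> V -> R).
Variables (m : R) (o : V).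
Hypothesis mu_sym : forall x y, mu x y = mu y x.
Hypothesis mu_ge0 : forall x y, 0 <= mu x y.
Hypothesis mu_adj : forall x y, 0 < mu x y <-> adj x y.
Hypothesis adj_sym : forall x y, adj x y -> adj y x.
Hypothesis adj_conn : graph_connected adj.

Local Notation d x := (dist adj o x).

Definition out_weight x : R := \sum_(y \in [set y | (d x < d y)%N]) mu x y.

Lemma out_weight_ge0 x : 0 <= out_weight x.
Proof. exact: fsumr_ge0. Qed.

Lemma out_weight_seq s x : uniq s -> (forall y, adj x y -> y \in s) ->
  out_weight x = \sum_(y <- s) (if (d x < d y)%N then mu x y else 0).
Proof.
move=> us nbs; rewrite /out_weight (fsbig_seq_mkcond us) => [|y _ xy]; last first.
  by apply: nbs; apply/mu_adj; rewrite lt_def xy mu_ge0.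
by apply: eq_bigr => y _; congr (if _ then _ else _); apply/idP/idP; rewrite inE.
Qed.

Lemma W_seq s n : uniq s -> (forall x, (d x <= n)%N -> x \in s) ->
  W adj mu o n = \sum_(x <- s) (if (d x <= n)%N then out_weight x else 0).
Proof.
move=> us sball; rewrite /W (fsbig_seq_mkcond us) => [|x /= xn _]; last exact: sball.
by apply: eq_bigr => x _; congr (if _ then _ else _); apply/idP/idP; rewrite inE.
Qed.

Lemma radial_energy_le (D F : nat -> R) s : 1 < m -> uniq s ->
  (forall k, 0 <= D k) -> (forall k, `|F k - F k.+1| <= D k) ->
  (forall x, x \in s -> D (d x) != 0 -> forall y, adj x y -> y \in s) ->
  energy mu m s (fun x => F (d x)) <= 2 * \sum_(x <- s) D (d x) `^ m * out_weight x.
Proof.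
move=> m1 us D0 FD sD.
have m0 : 0 < m by lra.
pose A x y := if (d x < d y)%N then mu x y * D (d x) `^ m else 0.
have A_ge0 x y : 0 <= A x y by rewrite /A; case: ifP => // _; rewrite mulr_ge0 ?powR_ge0.
(* An edge joins two points of the same sphere, where a radial function does not
   vary, or of consecutive spheres. *)
have edge x y : mu x y * `|F (d x) - F (d y)| `^ m <= A x y + A y x.
  have [xy|nxy] := pselect (adj x y); last by rewrite (mu_nadj mu_ge0 mu_adj nxy) mul0r addr_ge0.
  have dyx := dist_adj adj_conn o xy; have dxy := dist_adj adj_conn o (adj_sym xy).
  rewrite /A; case: ltngtP => [lt|gt|->]; last by rewrite subrr normr0 powR0 ?gt_eqF ?mulr0.
  - have -> : d y = (d x).+1 by apply/eqP; rewrite eqn_leq dyx lt.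
    rewrite addr0 ler_wpM2l //.
    by apply: ge0_ler_powR (FD _); rewrite ?nnegrE //; lra.
  - have -> : d x = (d y).+1 by apply/eqP; rewrite eqn_leq dxy gt.
    rewrite add0r mu_sym distrC ler_wpM2l //.
    by apply: ge0_ler_powR (FD _); rewrite ?nnegrE //; lra.
have rowA x : x \in s -> \sum_(y <- s) A x y = D (d x) `^ m * out_weight x.
  move=> xs; have [Dx0|/(sD x xs) nbs] := eqVneq (D (d x)) 0.
    rewrite Dx0 powR0 ?gt_eqF // mul0r big1 // => y _.
    by rewrite /A Dx0 powR0 ?gt_eqF // mulr0; case: ifP.
  rewrite (out_weight_seq us nbs) mulr_sumr; apply: eq_bigr => y _.
  by rewrite /A; case: ifP => _; rewrite ?mulr0 // mulrC.
apply: le_trans (_ : \sum_(x <- s) \sum_(y <- s) (A x y + A y x) <= _).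
  by apply: ler_sum => x _; apply: ler_sum => y _; apply: edge.
under eq_bigr => x _ do rewrite big_split.
have sumA : \sum_(x <- s) \sum_(y <- s) A x y = \sum_(x <- s) D (d x) `^ m * out_weight x.
  by rewrite big_seq [RHS]big_seq; apply: eq_bigr => x xs; apply: rowA.
by rewrite big_split /= [X in _ + X]exchange_big /= sumA mulr2n mulrDl mul1r.
Qed.

Lemma shell_sum_le (D : nat -> R) (r : seq nat) (c : nat -> R) (b : nat -> nat) s :
  uniq s -> (forall j, 0 <= c j) ->
  (forall k, D k `^ m <= \sum_(j <- r) (if (k <= b j)%N then c j else 0)) ->
  (forall j x, j \in r -> (d x <= b j)%N -> x \in s) ->
  \sum_(x <- s) D (d x) `^ m * out_weight x <= \sum_(j <- r) c j * W adj mu o (b j).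
Proof.
move=> us c0 Dc sball.
apply: le_trans (_ : \sum_(x <- s) \sum_(j <- r)
    (if (d x <= b j)%N then c j else 0) * out_weight x <= _).
  by apply: ler_sum => x _; rewrite -mulr_suml ler_wpM2r ?out_weight_ge0.
rewrite exchange_big /= big_seq [X in _ <= X]big_seq; apply: ler_sum => j jr.
rewrite (W_seq us (fun x => sball j x jr)) mulr_sumr; apply: ler_sum => x _.
by case: ifP => _; rewrite ?mul0r ?mulr0.
Qed.

End RadialEnergy.

Lemma powRV (R : realType) (x r : R) : 0 <= x -> (x^-1) `^ r = (x `^ r)^-1.
Proof. by move=> x0; rewrite -powR_inv1 // -powRrM mulN1r powRN. Qed.

Definition harmonic_sum (R : realType) (J J' : nat) : R := \sum_(J <= j < J') (j.+1%:R)^-1.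

Lemma harmonic_sum_double (R : realType) n : (0 < n)%N -> 2^-1 <= harmonic_sum R n n.*2.
Proof.
case: n => // n _; rewrite /harmonic_sum.
apply: le_trans (_ : \sum_(n.+1 <= i < n.+1.*2) (n.+1.*2%:R : R)^-1 <= _).
  rewrite sumr_const_nat -addnn addnK addnn -mul2n natrM invfM.
  by rewrite -[_ *+ n.+1]mulr_natr divfK.
by apply: ler_sum_nat => i /andP[_ ?]; rewrite lef_pV2 ?qualifE/= ?ler_nat.
Qed.

Lemma harmonic_sum_dyadic (R : realType) J k : (0 < J)%N ->
  k%:R / 2 <= harmonic_sum R J (J * 2 ^ k).
Proof.
move=> J0; elim: k => [|k IH]; first by rewrite mul0r sumr_ge0.
have Jk : (0 < J * 2 ^ k)%N by rewrite muln_gt0 J0 expn_gt0.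
rewrite /harmonic_sum (@big_cat_nat _ _ _ (J * 2 ^ k)) /=; first last.
- by rewrite leq_mul2l expnS leq_pmull ?orbT // expn_gt0.
- by rewrite leq_pmulr // expn_gt0.
rewrite expnS mulnCA mul2n.
have := harmonic_sum_double R Jk; rewrite /harmonic_sum -natr1 in IH *; lra.
Qed.

Section DyadicProfile.
Variables (R : realType) (c : R) (J J' : nat).
Hypothesis c0 : 0 < c.

Definition slope (k : nat) : R :=
  if (0 < k)%N && (J <= trunc_log 2 k < J')%N
  then c / ((trunc_log 2 k).+1%:R * (2 ^ trunc_log 2 k)%:R) else 0.

Definition profile (k : nat) : R := Num.max 0 (1 - \sum_(0 <= i < k) slope i).

Definition shell_cost (m : R) (j : nat) : R := (c / (j.+1%:R * (2 ^ j)%:R)) `^ m.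

Lemma slope_ge0 k : 0 <= slope k.
Proof. by rewrite /slope; case: ifP => // _; rewrite divr_ge0 // ltW. Qed.

Lemma profile_ge0 k : 0 <= profile k.
Proof. by rewrite le_max lexx. Qed.

Lemma profile_lipschitz k : `|profile k - profile k.+1| <= slope k.
Proof.
rewrite /profile big_nat_recr //= opprD addrA.
move: (1 - _) (slope k) (slope_ge0 k) => a b b0.
by have [] := leP 0 a; have [] := leP 0 (a - b); rewrite ler_norml; lra.
Qed.

Lemma slope_powR_le m k : 0 < m ->
  slope k `^ m <= \sum_(J <= j < J') (if (k <= 2 ^ j.+1)%N then shell_cost m j else 0).
Proof.
move=> m0; have cost_ge0 j : 0 <= (if (k <= 2 ^ j.+1)%N then shell_cost m j else 0).
  by case: ifP => // _; apply: powR_ge0.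
rewrite /slope; case: ifPn => [/andP[k0 kJ]|_]; last by rewrite powR0 ?gt_eqF ?sumr_ge0.
have kin : trunc_log 2 k \in index_iota J J' by rewrite mem_index_iota.
apply: le_trans (sum_seq_ge_term (iota_uniq _ _) kin (fun j _ => cost_ge0 j)).
by rewrite ltnW ?trunc_log_ltn.
Qed.

Lemma slope_small i : (i < 2 ^ J)%N -> slope i = 0.
Proof.
move=> iJ; rewrite /slope; case: ifPn => // /andP[i0 /andP[Ji _]].
have := trunc_logP (isT : (1 < 2)%N) i0; rewrite leqNgt => /negP[].
by apply: leq_trans iJ _; rewrite leq_exp2l.
Qed.

Lemma profile_eq1 k : (k <= 2 ^ J)%N -> profile k = 1.
Proof.
move=> kJ; rewrite /profile big_nat_cond big1 ?subr0 ?max_r // => i.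
by case/andP=> /andP[_ ik] _; apply: slope_small; apply: leq_trans ik kJ.
Qed.

Lemma sum_slope_pow2 n : (n <= J')%N ->
  \sum_(0 <= i < 2 ^ n) slope i = \sum_(0 <= j < n) (if (J <= j)%N then c / j.+1%:R else 0).
Proof.
elim: n => [|n IH] nJ; first by rewrite expn0 big_nat1 big_geq // /slope.
rewrite big_nat_recr //= -IH; last exact: ltnW.
rewrite (@big_cat_nat _ _ _ (2 ^ n)) //=; last by rewrite leq_exp2l.
congr (_ + _).
have shell i : (2 ^ n <= i < 2 ^ n.+1)%N ->
    slope i = if (J <= n)%N then c / (n.+1%:R * (2 ^ n)%:R) else 0.
  move=> /andP[ni iSn].
  have li : trunc_log 2 i = n by apply: trunc_log_eq => //; rewrite ni iSn.
  have i0 : (0 < i)%N by apply: leq_trans ni; rewrite expn_gt0.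
  by rewrite /slope li i0 nJ andbT.
rewrite (eq_big_nat _ _ shell) sumr_const_nat expnS mul2n -addnn addnK.
case: ifP => _; last by rewrite mul0rn.
rewrite -mulr_natr; field.
by rewrite addrC natr1 !pnatr_eq0 expn_eq0.
Qed.

Lemma profile_eq0 k : 1 <= c * harmonic_sum R J J' -> (2 ^ J' <= k)%N -> profile k = 0.
Proof.
move=> cH kJ; rewrite /profile max_l // subr_le0.
have cHE : c * harmonic_sum R J J' =
    \sum_(0 <= j < J') (if (J <= j)%N then c / j.+1%:R else 0).
  have [JJ'|J'J] := leqP J J'; last first.
    rewrite /harmonic_sum big_geq ?mulr0 1?ltnW // big_nat_cond big1 // => i.
    by case/andP=> /andP[_ iJ'] _; rewrite leqNgt (ltn_trans iJ').
  rewrite (@big_cat_nat _ _ _ J) //= big_nat_cond big1 ?add0r => [|i]; last first.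
    by case/andP=> /andP[_ iJ] _; rewrite leqNgt iJ.
  by rewrite /harmonic_sum mulr_sumr; apply: eq_big_nat => i /andP[-> _]; rewrite mulrC.
rewrite cHE -sum_slope_pow2 // in cH; apply: le_trans cH _.
by rewrite [leRHS](@big_cat_nat _ _ _ (2 ^ J')) //= lerDl sumr_ge0 // => i _; apply: slope_ge0.
Qed.

End DyadicProfile.

(* The growth bound at radius 2^(j+1) absorbs the dyadic factors of the shell cost,
   leaving the harmonic weight 1/(j+1). *)
Lemma shell_cost_W (R : realType) (m c C : R) j : 1 < m -> 0 < c ->
  shell_cost c m j * (C * (2 ^ j.+1)%:R `^ m * ln ((2 ^ j.+1)%:R : R) `^ (m - 1)) =
  C * 2 `^ m * ln 2 `^ (m - 1) * c `^ m / j.+1%:R.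
Proof.
move=> m1 c0.
set a : R := j.+1%:R; set p : R := (2 ^ j)%:R.
have a0 : 0 < a by rewrite ltr0n.
have p0 : 0 < p by rewrite ltr0n expn_gt0.
have -> : ln ((2 ^ j.+1)%:R : R) = a * ln 2 by rewrite natrX lnXn // mulr_natl.
have -> : (2 ^ j.+1)%:R = 2 * p :> R by rewrite expnS natrM.
have ln2 : 0 < ln (2 : R) by rewrite ln_gt0 // ltr1n.
rewrite /shell_cost powRM ?(ltW c0) ?invr_ge0 ?mulr_ge0 ?ltW // powRV ?mulr_ge0 ?ltW //.
rewrite !powRM ?ltW // -(mulr_powRB1 (ltW a0) (_ : 0 < m)); last lra.
have pm0 : p `^ m != 0 by rewrite gt_eqF // powR_gt0.
have am0 : a `^ (m - 1) != 0 by rewrite gt_eqF // powR_gt0.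
by field; rewrite pm0 am0 gt_eqF.
Qed.

Lemma harmonic_sum_unbounded (R : realType) (T : R) J : (0 < J)%N ->
  exists2 J', (J <= J')%N & T <= harmonic_sum R J J'.
Proof.
move=> J0; have [T0|T0] := leP T 0.
  by exists J; rewrite // /harmonic_sum big_geq.
have kT := archi_boundP (ltW (mulr_gt0 (ltr0n R 2) T0)).
exists (J * 2 ^ Num.Def.archi_bound (2 * T))%N; first by rewrite leq_pmulr // expn_gt0.
by apply: le_trans (harmonic_sum_dyadic R _ J0); rewrite ler_pdivlMr //; lra.
Qed.

Lemma inv_powR_mul_le (R : realType) (m K eps H : R) : 1 < m -> 0 < K -> 0 < eps ->
  (K / eps) `^ (m - 1)^-1 <= H -> K * (H^-1 `^ m * H) <= eps.
Proof.
move=> m1 K0 eps0 HT.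
have Keps : 0 < K / eps by rewrite divr_gt0.
have H0 : 0 < H by apply: lt_le_trans HT; rewrite powR_gt0.
have -> : H^-1 `^ m * H = (H `^ (m - 1))^-1.
  rewrite powRV ?ltW // -(mulr_powRB1 (ltW H0) (_ : 0 < m)); last lra.
  by rewrite invfM mulrAC mulVf ?gt_eqF // mul1r.
have HmT : K / eps <= H `^ (m - 1).
  have m10 : 0 <= m - 1 by lra.
  have := ge0_ler_powR m10 (powR_ge0 _ _) (ltW H0) HT.
  by rewrite -powRrM mulVf ?powRr1 ?(ltW Keps) // subr_eq0 gt_eqF.
have Hm0 : 0 < H `^ (m - 1) by rewrite powR_gt0.
by rewrite ler_pdivrMr // mulrC -ler_pdivrMr.
Qed.

Section Parabolicity.
Variables (R : realType) (V : choiceType) (adj : V -> V -> Prop) (mu : V -> V -> R).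
Variables (m C : R) (o : V) (n1 : nat).
Hypothesis mu_sym : forall x y, mu x y = mu y x.
Hypothesis mu_ge0 : forall x y, 0 <= mu x y.
Hypothesis mu_adj : forall x y, 0 < mu x y <-> adj x y.
Hypothesis adj_sym : forall x y, adj x y -> adj y x.
Hypothesis adj_conn : graph_connected adj.
Hypothesis adj_lf : locally_finite adj.
Hypothesis W_growth : forall n : nat, (n1 <= n)%N ->
  W adj mu o n <= C * n%:R `^ m * ln (n%:R : R) `^ (m - 1).

Local Notation d x := (dist adj o x).

Lemma ball_enum n : exists2 s : seq V, uniq s & forall x, (x \in s) = (d x <= n)%N.
Proof.
have ball_fin := finite_ball adj_conn o n adj_lf.
exists (finmap.enum_fset (fset_set (Defs.ball adj o n))); first exact: finmap.fset_uniq.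
by move=> x; rewrite (in_fset_set ball_fin); apply/idP/idP; rewrite inE.
Qed.

Lemma energy_profile_le J J' c s : 1 < m -> (n1 <= J)%N -> 0 < c -> uniq s ->
  (forall x, (d x <= 2 ^ J')%N -> x \in s) ->
  energy mu m s (fun x => profile c J J' (d x)) <=
  2 * (C * 2 `^ m * ln 2 `^ (m - 1) * c `^ m * harmonic_sum R J J').
Proof.
move=> m1 n1J c0 us sball.
have nbs x : (d x < 2 ^ J')%N -> forall y, adj x y -> y \in s.
  by move=> dx y xy; apply: sball; apply: leq_trans (dist_adj adj_conn o xy) dx.
apply: le_trans (radial_energy_le mu_sym mu_ge0 mu_adj adj_sym adj_conn m1 us
  (slope_ge0 J J' c0) (profile_lipschitz J J' c0) _) _.
  move=> x _; rewrite /slope; case: ifP => [/andP[_ /andP[_ lt]] _|]; last by rewrite eqxx.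
  apply: nbs; apply: leq_trans (trunc_log_ltn _ (isT : (1 < 2)%N)) _.
  by rewrite leq_exp2l.
rewrite ler_pM2l //.
have m0 : 0 < m by lra.
apply: le_trans (shell_sum_le mu_ge0 (o := o) (r := index_iota J J')
  (c := shell_cost c m) (b := fun j => (2 ^ j.+1)%N) us (fun j => powR_ge0 _ _)
  (fun k => slope_powR_le c J J' k m0) _) _.
  move=> j x; rewrite mem_index_iota => /andP[_ jJ'] dx.
  by apply: sball; apply: leq_trans dx _; rewrite leq_exp2l.
rewrite /harmonic_sum mulr_sumr big_seq [leRHS]big_seq; apply: ler_sum => j.
rewrite mem_index_iota => /andP[Jj _].
have n1j : (n1 <= 2 ^ j.+1)%N.
  apply: leq_trans (ltnW (ltn_expl _ (isT : (1 < 2)%N))).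
  by apply: leq_trans n1J (leq_trans Jj (leqnSn j)).
apply: le_trans (ler_wpM2l (powR_ge0 _ _) (W_growth n1j)) _.
by rewrite shell_cost_W // mulrA.
Qed.

Lemma cutoff_small_energy r eps : 1 < m -> 0 < C -> 0 < eps ->
  exists s phi, [/\ uniq s, nbhd_support_in adj s phi, forall x, 0 <= phi x,
    forall x, (d x <= r)%N -> x \in s /\ phi x = 1 & energy mu m s phi <= eps].
Proof.
move=> m1 C0 eps0.
have m0 : 0 < m by lra.
set J := (maxn r n1).+1.
set K0 := C * 2 `^ m * ln 2 `^ (m - 1).
have K0pos : 0 < K0 by rewrite !mulr_gt0 ?powR_gt0 // ln_gt0 // ltr1n.
set T := (2 * K0 / eps) `^ (m - 1)^-1.
have T0 : 0 < T by rewrite powR_gt0 // divr_gt0 // mulr_gt0.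
have [J' JJ' HT] := harmonic_sum_unbounded T (isT : (0 < J)%N).
set H := harmonic_sum R J J' in HT *.
have H0 : 0 < H := lt_le_trans T0 HT.
have [s us sE] := ball_enum (2 ^ J').
have sball x : (d x <= 2 ^ J')%N -> x \in s by rewrite sE.
exists s, (fun x => profile H^-1 J J' (d x)); split => //.
- move=> x phix; have dx : (d x < 2 ^ J')%N.
    rewrite ltnNge; apply: contra phix => dx; apply/eqP.
    by apply: profile_eq0 => //; rewrite ?invr_gt0 // mulVf ?gt_eqF.
  split; first exact/sball/ltnW.
  by move=> y xy; apply: sball; apply: leq_trans (dist_adj adj_conn o xy) dx.
- by move=> x; apply: profile_ge0.
- have rJ : (r <= 2 ^ J)%N.
    by apply: leq_trans (ltnW (ltn_expl _ (isT : (1 < 2)%N))); rewrite leqW // leq_maxl.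
  move=> x dx; have dxJ := leq_trans dx rJ; split; last exact: profile_eq1.
  by apply: sball; apply: leq_trans dxJ _; rewrite leq_exp2l.
apply: le_trans (energy_profile_le (J := J) (c := H^-1) m1 _ _ us sball) _.
- by rewrite leqW // leq_maxr.
- by rewrite invr_gt0.
rewrite -(mulrA K0) mulrA; apply: inv_powR_mul_le m1 _ eps0 HT.
by rewrite mulr_gt0.
Qed.

Lemma msuperharmonic_edge_const M w : 1 < m -> 0 < C -> 0 < M ->
  (forall x, 0 <= w x <= M) -> msuperharmonic adj mu m w ->
  forall x y, adj x y -> w x = w y.
Proof.
move=> m1 C0 M0 w_bound w_super x y xy.
have K1 : 0 < cacc_const m M + 1 by rewrite ltr_pwDr ?cacc_const_ge0 //; lra.
have Q0 : mu x y * `|w y - w x| `^ m / 2 <= 0.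
  apply/ler_addgt0Pr => e e0; rewrite add0r.
  have [s [phi [us supp phi0 phi1 small]]] :=
    cutoff_small_energy (maxn (d x) (d y)) m1 C0 (divr_gt0 e0 K1).
  have [xs phix] := phi1 x (leq_maxl _ _); have [ys phiy] := phi1 y (leq_maxr _ _).
  apply: le_trans (caccioppoli mu_sym mu_ge0 mu_adj w_bound w_super m1 M0 us supp phi0
    xs ys phix phiy) _.
  apply: le_trans (ler_wpM2l (cacc_const_ge0 (ltW (lt_trans ltr01 m1)) (ltW M0)) small) _.
  rewrite mulrA ler_pdivrMr //; nra.
have mu0 : 0 < mu x y by apply/mu_adj.
have half0 : 0 < 2^-1 :> R by rewrite invr_gt0.
rewrite pmulr_lle0 // pmulr_rle0 // in Q0.
have : `|w y - w x| `^ m = 0 by apply/eqP; rewrite eq_le Q0 powR_ge0.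
by move/powR_eq0_eq0/normr0_eq0/eqP; rewrite subr_eq0 => /eqP.
Qed.

End Parabolicity.

Lemma ler_fsum_finite (R : realType) (T : choiceType) (A : set T) (f g : T -> R) :
  finite_set A -> (forall y, A y -> f y <= g y) -> \sum_(y \in A) f y <= \sum_(y \in A) g y.
Proof.
move=> Afin fg; rewrite !fsbig_finite // big_seq [leRHS]big_seq.
by apply: ler_sum => y; rewrite in_fset_set // inE => /fg.
Qed.

Section Solutions.
Variables (R : realType) (V : choiceType) (adj : V -> V -> Prop) (mu : V -> V -> R).
Hypothesis mu_ge0 : forall x y, 0 <= mu x y.
Hypothesis mu_adj : forall x y, 0 < mu x y <-> adj x y.
Hypothesis adj_lf : locally_finite adj.

Lemma vmeas_gt0 x y : adj x y -> 0 < vmeas adj mu x.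
Proof.
move=> xy; rewrite lt_def fsumr_ge0 // andbT; apply/eqP => vx0.
have := pfsumr_eq0 (adj_lf x) (fun y _ => mu_ge0 x y) vx0 xy.
by move/eqP; rewrite gt_eqF //; apply/mu_adj.
Qed.

Lemma solution_msuperharmonic m p q u : 0 < m -> m <= q ->
  (forall x, 0 < vmeas adj mu x) -> (forall x, ineq_at adj mu m p q u x) ->
  msuperharmonic adj mu m u.
Proof.
move=> m0 mq vmeas0 sol x; have := sol x.
rewrite /ineq_at ltNge (ltW (lt_le_trans m0 mq)) /= => ineq.
have -> : \sum_(y \in [set y | adj x y]) mu x y * spow m (u y - u x) =
    vmeas adj mu x * mLap adj mu m u x.
  rewrite /mLap mulrA mulfV ?gt_eqF // mul1r.
  by apply: eq_fsbigr => y _; rewrite mulrA.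
rewrite pmulr_rle0 //; apply: le_trans ineq.
by rewrite lerDl mulr_ge0 ?powR_ge0.
Qed.

Lemma msuperharmonic_min m M u : 1 < m -> msuperharmonic adj mu m u ->
  msuperharmonic adj mu m (fun x => Num.min (u x) M).
Proof.
move=> m1 u_super x; have [uxM|Mux] := leP (u x) M.
  apply: le_trans (u_super x); apply: ler_fsum_finite => // y _.
  apply: ler_wpM2l => //; have [//|Muy] := leP (u y) M.
  by rewrite ler_spow // subr_ge0 uxM lerD2r ltW.
apply: fsumr_le0 => y _; rewrite mulr_ge0_le0 // spow_le0 // subr_le0.
by rewrite ge_min lexx orbT.
Qed.

End Solutions.

Unset Implicit Arguments.
Set Strict Implicit.

Theorem theorem1p1 (V : choiceType) (adj : V -> V -> Prop) (R : realType)
  (mu : V -> V -> R) (m p q : R) (o : V) (C : R) (n1 : nat) :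
  simple_graph adj -> infinite_graph V -> graph_connected adj -> locally_finite adj ->
  is_weight adj mu -> cond_p0 adj mu ->
  1 < m -> m <= q ->
  0 < C ->
  (forall n : nat, (n1 <= n)%N ->
     W adj mu o n <= C * (n%:R `^ m) * (ln (n%:R : R)) `^ (m - 1)) ->
  ~ exists u : V -> R, nontrivial_positive_solution adj mu m p q u.
Proof.
move=> [_ adj_sym] Vinf adj_conn adj_lf [mu_sym [mu_ge0 mu_adj]] _ m1 mq C0 W_growth.
case=> u [u_pos [[a [b uab]] sol]].
have vmeas0 x : 0 < vmeas adj mu x.
  by have [y xy] := adj_exists adj_conn x Vinf; apply: vmeas_gt0 xy.
have u_super := solution_msuperharmonic (lt_trans ltr01 m1) mq vmeas0 sol.
pose M := Num.max (u a) (u b).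
pose w x := Num.min (u x) M.
have M0 : 0 < M by rewrite lt_max u_pos.
have w_bound x : 0 <= w x <= M by rewrite le_min ge_min lexx orbT !ltW ?u_pos.
have w_edge := msuperharmonic_edge_const mu_sym mu_ge0 mu_adj adj_sym adj_conn adj_lf
  W_growth m1 C0 M0 w_bound (msuperharmonic_min mu_ge0 adj_lf M m1 u_super).
have [n walk_ab] := adj_conn a b.
have [|x [y [xy]]] := walk_edge_neq (f := w) walk_ab; last by rewrite (w_edge x y xy) eqxx.
by rewrite /w !min_l // le_max lexx ?orbT.
Qed.
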